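(* Let $c\in\mathbb{R}\setminus\{0\}$ and let $\boldsymbol\eta_c:\mathbb{R}^2\to\mathbb{R}^2$ be $$\boldsymbol\eta_c(u,v)=\bigl(u^2-v^2,\ -2uv+4cv\bigr).$$ Let $\mathbf y=(s_1,s_2)$ be a point in the four-image region of $\boldsymbol\eta_c$, i.e. the equation $\boldsymbol\eta_c(\mathbf x)=\mathbf y$ has exactly four distinct solutions $\mathbf x_1,\dots,\mathbf x_4\in\mathbb{R}^2$, each with $\det(\mathrm{Jac}\,\boldsymbol\eta_c)(\mathbf x_i)\neq 0$. Then the signed magnifications $\mu_i=1/\det(\mathrm{Jac}\,\boldsymbol\eta_c)(\mathbf x_i)$ satisfy $$\mu_1+\mu_2+\mu_3+\mu_4=0.$$ Explicitly, $\det(\mathrm{Jac}\,\boldsymbol\eta_c)(u,v)=8cu-4(u^2+v^2)$, so $\sum_{i=1}^4 \frac{1}{8cu_i-4(u_i^2+v_i^2)}=0$ where $\mathbf x_i=(u_i,v_i)$.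
   Context: This map is the universal quantitative form of a one-parameter family of gravitational lensing maps near an elliptic umbilic caustic. The four-image region is the bounded region enclosed by the caustic curve $s_1=2c^2\cos\phi(1+\cos\phi)$, $s_2=2c^2\sin\phi(1-\cos\phi)$, $\phi\in[0,2\pi)$; sources in its interior have exactly four preimages. *)

From Stdlib Require Import Reals Lra.
Open Scope R_scope.

Definition eta1 (c u v : R) : R := u^2 - v^2.
Definition eta2 (c u v : R) : R := -2*u*v + 4*c*v.

(* Entries of the Jacobian matrix of eta_c (its partial derivatives). *)
Definition d1eta1 (c u v : R) : R := 2*u.
Definition d2eta1 (c u v : R) : R := -2*v.
Definition d1eta2 (c u v : R) : R := -2*v.
Definition d2eta2 (c u v : R) : R := -2*u + 4*c.

Definition jacdet (c u v : R) : R :=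
  d1eta1 c u v * d2eta2 c u v - d2eta1 c u v * d1eta2 c u v.

Definition is_preimage (c s1 s2 u v : R) : Prop :=
  eta1 c u v = s1 /\ eta2 c u v = s2.

From Stdlib Require Import Reals Lra.
Open Scope R_scope.

(* Write w = 4c - 2u.  The second component of eta_c gives
   v * w = s2, and a direct computation shows that on the fibre over (s1,s2)
   the Jacobian satisfies  jacdet * w = R'(u), where
   R(u) = (u^2 - s1) (2u - 4c)^2 - s2^2  is the quartic obtained by
   eliminating v.
   - If s2 <> 0, then w <> 0, v = s2 / w is determined by u, so the four
     preimages have four distinct abscissae u_i, which are the roots of R.
     Hence R = 4 prod (u - u_i) (Vieta), R'(u_i) = 4 prod_(j<>i) (u_i - u_j),
     and  sum 1/jacdet_i = sum w(u_i) / R'(u_i) = 0  by the partial-fraction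
     identity  sum_i q(x_i) / prod_(j<>i) (x_i - x_j) = 0  for deg q <= 2.
   - If s2 = 0, every preimage lies on the line v = 0 (where u^2 = s1) or on
     the line u = 2c (where v^2 = 4c^2 - s1).  Each line carries at most two
     preimages, so each carries exactly two, symmetric with respect to the
     axis; their magnifications cancel by an explicit computation. *)

Lemma cancel_nonzero_factor (x y : R) : x <> 0 -> x * y = 0 -> y = 0.
Proof.
  intros Hx Hxy.
  destruct (Rmult_integral _ _ Hxy) as [H | H]; [contradiction | exact H].
Qed.

Lemma distinct_equal_squares (x y : R) : x^2 = y^2 -> x <> y -> y = - x.
Proof.
  intros Hsq Hxy.
  assert (Hfac : (x - y) * (x + y) = 0) by lra.
  apply cancel_nonzero_factor in Hfac; [lra |].
  intro H; apply Hxy; lra.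
Qed.

Lemma no_three_equal_squares (x y z : R) :
  x^2 = y^2 -> x^2 = z^2 -> x <> y -> x <> z -> y <> z -> False.
Proof.
  intros Hxy Hxz nxy nxz nyz.
  apply nyz.
  rewrite (distinct_equal_squares x y Hxy nxy), (distinct_equal_squares x z Hxz nxz).
  reflexivity.
Qed.

Definition quartic (a4 a3 a2 a1 a0 x : R) : R :=
  a4*x^4 + a3*x^3 + a2*x^2 + a1*x + a0.
Definition quartic_deriv (a4 a3 a2 a1 x : R) : R :=
  4*a4*x^3 + 3*a3*x^2 + 2*a2*x + a1.

(* A polynomial of degree at most 3 vanishing at four distinct points is zero;
   proved by taking successive divided differences. *)
Lemma cubic_with_four_roots (a b c d x1 x2 x3 x4 : R) :
  x1 <> x2 -> x1 <> x3 -> x1 <> x4 -> x2 <> x3 -> x2 <> x4 -> x3 <> x4 ->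
  a*x1^3 + b*x1^2 + c*x1 + d = 0 -> a*x2^3 + b*x2^2 + c*x2 + d = 0 ->
  a*x3^3 + b*x3^2 + c*x3 + d = 0 -> a*x4^3 + b*x4^2 + c*x4 + d = 0 ->
  a = 0 /\ b = 0 /\ c = 0 /\ d = 0.
Proof.
  intros n12 n13 n14 n23 n24 n34 H1 H2 H3 H4.
  assert (D12 : a*(x1^2 + x1*x2 + x2^2) + b*(x1 + x2) + c = 0)
    by (apply (cancel_nonzero_factor (x1 - x2)); lra).
  assert (D13 : a*(x1^2 + x1*x3 + x3^2) + b*(x1 + x3) + c = 0)
    by (apply (cancel_nonzero_factor (x1 - x3)); lra).
  assert (D14 : a*(x1^2 + x1*x4 + x4^2) + b*(x1 + x4) + c = 0)
    by (apply (cancel_nonzero_factor (x1 - x4)); lra).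
  assert (D123 : a*(x1 + x2 + x3) + b = 0)
    by (apply (cancel_nonzero_factor (x2 - x3)); lra).
  assert (D124 : a*(x1 + x2 + x4) + b = 0)
    by (apply (cancel_nonzero_factor (x2 - x4)); lra).
  assert (Ha : a = 0) by (apply (cancel_nonzero_factor (x3 - x4)); lra).
  subst a.
  assert (Hb : b = 0) by lra. subst b.
  assert (Hc : c = 0) by lra. subst c.
  lra.
Qed.

Lemma quartic_vieta (a4 a3 a2 a1 a0 x1 x2 x3 x4 : R) :
  x1 <> x2 -> x1 <> x3 -> x1 <> x4 -> x2 <> x3 -> x2 <> x4 -> x3 <> x4 ->
  quartic a4 a3 a2 a1 a0 x1 = 0 ->
  quartic a4 a3 a2 a1 a0 x2 = 0 ->
  quartic a4 a3 a2 a1 a0 x3 = 0 ->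
  quartic a4 a3 a2 a1 a0 x4 = 0 ->
  a3 = - a4 * (x1 + x2 + x3 + x4) /\
  a2 = a4 * (x1*x2 + x1*x3 + x1*x4 + x2*x3 + x2*x4 + x3*x4) /\
  a1 = - a4 * (x1*x2*x3 + x1*x2*x4 + x1*x3*x4 + x2*x3*x4) /\
  a0 = a4 * (x1*x2*x3*x4).
Proof.
  unfold quartic.
  intros n12 n13 n14 n23 n24 n34 H1 H2 H3 H4.
  (* The difference with a4 * prod (x - x_i) is a cubic with the same roots. *)
  assert (Hdiff : forall x,
    a4*x^4 + a3*x^3 + a2*x^2 + a1*x + a0 - a4*((x-x1)*(x-x2)*(x-x3)*(x-x4)) =
    (a3 + a4*(x1 + x2 + x3 + x4))*x^3
    + (a2 - a4*(x1*x2 + x1*x3 + x1*x4 + x2*x3 + x2*x4 + x3*x4))*x^2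
    + (a1 + a4*(x1*x2*x3 + x1*x2*x4 + x1*x3*x4 + x2*x3*x4))*x
    + (a0 - a4*(x1*x2*x3*x4))) by (intro; ring).
  destruct (cubic_with_four_roots
              (a3 + a4*(x1 + x2 + x3 + x4))
              (a2 - a4*(x1*x2 + x1*x3 + x1*x4 + x2*x3 + x2*x4 + x3*x4))
              (a1 + a4*(x1*x2*x3 + x1*x2*x4 + x1*x3*x4 + x2*x3*x4))
              (a0 - a4*(x1*x2*x3*x4))
              x1 x2 x3 x4 n12 n13 n14 n23 n24 n34)
    as [E3 [E2 [E1 E0]]].
  - rewrite <- Hdiff, H1; ring.
  - rewrite <- Hdiff, H2; ring.
  - rewrite <- Hdiff, H3; ring.
  - rewrite <- Hdiff, H4; ring.
  - repeat split; lra.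
Qed.

Lemma quartic_derivative_at_roots (a4 a3 a2 a1 a0 x1 x2 x3 x4 : R) :
  x1 <> x2 -> x1 <> x3 -> x1 <> x4 -> x2 <> x3 -> x2 <> x4 -> x3 <> x4 ->
  quartic a4 a3 a2 a1 a0 x1 = 0 ->
  quartic a4 a3 a2 a1 a0 x2 = 0 ->
  quartic a4 a3 a2 a1 a0 x3 = 0 ->
  quartic a4 a3 a2 a1 a0 x4 = 0 ->
  quartic_deriv a4 a3 a2 a1 x1 = a4 * ((x1 - x2) * (x1 - x3) * (x1 - x4)) /\
  quartic_deriv a4 a3 a2 a1 x2 = a4 * ((x2 - x1) * (x2 - x3) * (x2 - x4)) /\
  quartic_deriv a4 a3 a2 a1 x3 = a4 * ((x3 - x1) * (x3 - x2) * (x3 - x4)) /\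
  quartic_deriv a4 a3 a2 a1 x4 = a4 * ((x4 - x1) * (x4 - x2) * (x4 - x3)).
Proof.
  intros n12 n13 n14 n23 n24 n34 H1 H2 H3 H4.
  destruct (quartic_vieta _ _ _ _ _ _ _ _ _ n12 n13 n14 n23 n24 n34 H1 H2 H3 H4)
    as [-> [-> [-> _]]].
  unfold quartic_deriv; repeat split; ring.
Qed.

Lemma partial_fraction_sum (q0 q1 q2 x1 x2 x3 x4 : R) :
  x1 <> x2 -> x1 <> x3 -> x1 <> x4 -> x2 <> x3 -> x2 <> x4 -> x3 <> x4 ->
  (q0 + q1*x1 + q2*x1^2) / ((x1 - x2) * (x1 - x3) * (x1 - x4)) +
  (q0 + q1*x2 + q2*x2^2) / ((x2 - x1) * (x2 - x3) * (x2 - x4)) +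
  (q0 + q1*x3 + q2*x3^2) / ((x3 - x1) * (x3 - x2) * (x3 - x4)) +
  (q0 + q1*x4 + q2*x4^2) / ((x4 - x1) * (x4 - x2) * (x4 - x3)) = 0.
Proof.
  intros n12 n13 n14 n23 n24 n34.
  field.
  repeat split; apply Rminus_eq_contra; congruence.
Qed.

Lemma jacdet_explicit (c u v : R) : jacdet c u v = 8*c*u - 4*(u^2 + v^2).
Proof. unfold jacdet, d1eta1, d2eta1, d1eta2, d2eta2. ring. Qed.

Lemma preimage_second_component (c s1 s2 u v : R) :
  is_preimage c s1 s2 u v -> v * (4*c - 2*u) = s2.
Proof. unfold is_preimage, eta2. intros [_ H]. lra. Qed.

(* The resolvent (u^2 - s1) (2u - 4c)^2 - s2^2 obtained by eliminating v,
   written as a quartic in u. *)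
Definition resolvent (c s1 s2 u : R) : R :=
  quartic 4 (-16*c) (16*c^2 - 4*s1) (16*c*s1) (-16*c^2*s1 - s2^2) u.

Lemma preimage_resolvent_root (c s1 s2 u v : R) :
  is_preimage c s1 s2 u v -> resolvent c s1 s2 u = 0.
Proof. unfold is_preimage, eta1, eta2, resolvent, quartic. intros [<- <-]. ring. Qed.

Lemma preimage_jacdet_resolvent_deriv (c s1 s2 u v : R) :
  is_preimage c s1 s2 u v ->
  jacdet c u v * (4*c - 2*u) = quartic_deriv 4 (-16*c) (16*c^2 - 4*s1) (16*c*s1) u.
Proof.
  unfold is_preimage, eta1, eta2, quartic_deriv. rewrite jacdet_explicit.
  intros [<- _]. ring.
Qed.

Lemma preimage_weight_nonzero (c s1 s2 u v : R) :
  s2 <> 0 -> is_preimage c s1 s2 u v -> 4*c - 2*u <> 0.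
Proof.
  intros Hs2 H Hw. apply Hs2.
  rewrite <- (preimage_second_component _ _ _ _ _ H), Hw. ring.
Qed.

(* For a source off the axis, a preimage is determined by its abscissa, since
   v = s2 / (4c - 2u). *)
Lemma preimage_abscissa_distinct (c s1 s2 u v u' v' : R) :
  s2 <> 0 -> is_preimage c s1 s2 u v -> is_preimage c s1 s2 u' v' ->
  (u, v) <> (u', v') -> u <> u'.
Proof.
  intros Hs2 H H' Hneq Hu. subst u'. apply Hneq. f_equal.
  pose proof (preimage_second_component _ _ _ _ _ H) as E.
  pose proof (preimage_second_component _ _ _ _ _ H') as E'.
  assert (Hdiff : v - v' = 0).
  { apply (cancel_nonzero_factor (4*c - 2*u)).
    - exact (preimage_weight_nonzero _ _ _ _ _ Hs2 H).
    - lra. }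
  lra.
Qed.

Lemma inv_jacdet_resolvent (c s1 s2 u v : R) :
  s2 <> 0 -> is_preimage c s1 s2 u v -> jacdet c u v <> 0 ->
  / jacdet c u v = (4*c - 2*u) / quartic_deriv 4 (-16*c) (16*c^2 - 4*s1) (16*c*s1) u.
Proof.
  intros Hs2 H HJ.
  pose proof (preimage_weight_nonzero _ _ _ _ _ Hs2 H) as Hw.
  rewrite <- (preimage_jacdet_resolvent_deriv _ _ _ _ _ H).
  field. split; assumption.
Qed.

(* The theorem for sources off the axis: the four abscissae are the roots of
   the resolvent, and the sum becomes a partial-fraction sum. *)
Lemma magnification_sum_generic (c s1 s2 u1 v1 u2 v2 u3 v3 u4 v4 : R) :
  s2 <> 0 ->
  is_preimage c s1 s2 u1 v1 -> is_preimage c s1 s2 u2 v2 ->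
  is_preimage c s1 s2 u3 v3 -> is_preimage c s1 s2 u4 v4 ->
  (u1, v1) <> (u2, v2) -> (u1, v1) <> (u3, v3) -> (u1, v1) <> (u4, v4) ->
  (u2, v2) <> (u3, v3) -> (u2, v2) <> (u4, v4) -> (u3, v3) <> (u4, v4) ->
  jacdet c u1 v1 <> 0 -> jacdet c u2 v2 <> 0 ->
  jacdet c u3 v3 <> 0 -> jacdet c u4 v4 <> 0 ->
  / jacdet c u1 v1 + / jacdet c u2 v2 + / jacdet c u3 v3 + / jacdet c u4 v4 = 0.
Proof.
  intros Hs2 H1 H2 H3 H4 n12 n13 n14 n23 n24 n34 J1 J2 J3 J4.
  pose proof (preimage_abscissa_distinct _ _ _ _ _ _ _ Hs2 H1 H2 n12) as m12.
  pose proof (preimage_abscissa_distinct _ _ _ _ _ _ _ Hs2 H1 H3 n13) as m13.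
  pose proof (preimage_abscissa_distinct _ _ _ _ _ _ _ Hs2 H1 H4 n14) as m14.
  pose proof (preimage_abscissa_distinct _ _ _ _ _ _ _ Hs2 H2 H3 n23) as m23.
  pose proof (preimage_abscissa_distinct _ _ _ _ _ _ _ Hs2 H2 H4 n24) as m24.
  pose proof (preimage_abscissa_distinct _ _ _ _ _ _ _ Hs2 H3 H4 n34) as m34.
  destruct (quartic_derivative_at_roots _ _ _ _ _ u1 u2 u3 u4 m12 m13 m14 m23 m24 m34
              (preimage_resolvent_root _ _ _ _ _ H1) (preimage_resolvent_root _ _ _ _ _ H2)
              (preimage_resolvent_root _ _ _ _ _ H3) (preimage_resolvent_root _ _ _ _ _ H4))
    as [D1 [D2 [D3 D4]]].
  rewrite (inv_jacdet_resolvent _ _ _ _ _ Hs2 H1 J1), (inv_jacdet_resolvent _ _ _ _ _ Hs2 H2 J2),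
          (inv_jacdet_resolvent _ _ _ _ _ Hs2 H3 J3), (inv_jacdet_resolvent _ _ _ _ _ Hs2 H4 J4),
          D1, D2, D3, D4.
  rewrite <- (Rmult_0_r (/ 4)),
          <- (partial_fraction_sum (4*c) (-2) 0 u1 u2 u3 u4 m12 m13 m14 m23 m24 m34).
  field. repeat split; apply Rminus_eq_contra; congruence.
Qed.

Definition magnification (c : R) (p : R * R) : R := / jacdet c (fst p) (snd p).

(* Preimages of (s1, 0) on the u-axis (nondegenerate ones) and on the line
   u = 2c; on the latter nondegeneracy follows from that on the former. *)
Definition on_u_axis (c s1 : R) (p : R * R) : Prop :=
  exists a, p = (a, 0) /\ is_preimage c s1 0 a 0 /\ jacdet c a 0 <> 0.
Definition on_line_2c (c s1 : R) (p : R * R) : Prop :=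
  exists b, p = (2*c, b) /\ is_preimage c s1 0 (2*c) b.

(* Since eta2 = v (4c - 2u), the fibre over the axis lies on these two lines. *)
Lemma axis_fibre_on_two_lines (c s1 u v : R) :
  is_preimage c s1 0 u v -> jacdet c u v <> 0 ->
  on_u_axis c s1 (u, v) \/ on_line_2c c s1 (u, v).
Proof.
  intros H HJ.
  pose proof (preimage_second_component _ _ _ _ _ H) as E.
  destruct (Rmult_integral _ _ E) as [Hv | Hu].
  - left. subst v. exists u. auto.
  - right. replace u with (2*c) in * by lra. exists v. auto.
Qed.

Lemma at_most_two_on_u_axis (c s1 : R) (x y z : R * R) :
  on_u_axis c s1 x -> on_u_axis c s1 y -> on_u_axis c s1 z ->
  x <> y -> x <> z -> y <> z -> False.
Proof.
  unfold on_u_axis, is_preimage, eta1.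
  intros [a [-> [[Ha _] _]]] [b [-> [[Hb _] _]]] [d [-> [[Hd _] _]]] nxy nxz nyz.
  apply (no_three_equal_squares a b d); try lra; intros ->; auto.
Qed.

Lemma at_most_two_on_line_2c (c s1 : R) (x y z : R * R) :
  on_line_2c c s1 x -> on_line_2c c s1 y -> on_line_2c c s1 z ->
  x <> y -> x <> z -> y <> z -> False.
Proof.
  unfold on_line_2c, is_preimage, eta1.
  intros [a [-> [Ha _]]] [b [-> [Hb _]]] [d [-> [Hd _]]] nxy nxz nyz.
  apply (no_three_equal_squares a b d); try lra; intros ->; auto.
Qed.

(* For a^2 + b^2 = 4c^2, the magnifications at (+-a, 0) and (2c, +-b) cancel:
   they are 1/(4a(2c-a)), -1/(4a(2c+a)) and twice -1/(4b^2). *)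
Lemma symmetric_magnifications_cancel (c a b : R) :
  a^2 + b^2 = 4*c^2 ->
  jacdet c a 0 <> 0 -> jacdet c (-a) 0 <> 0 ->
  / jacdet c a 0 + / jacdet c (-a) 0 + / jacdet c (2*c) b + / jacdet c (2*c) (-b) = 0.
Proof.
  intros Hab Ja Jma.
  assert (Ea : jacdet c a 0 = 4*a*(2*c - a)) by (rewrite jacdet_explicit; ring).
  assert (Ema : jacdet c (-a) 0 = -4*a*(2*c + a)) by (rewrite jacdet_explicit; ring).
  assert (Eb : jacdet c (2*c) b = -4*((2*c - a)*(2*c + a))) by (rewrite jacdet_explicit; nra).
  assert (Emb : jacdet c (2*c) (-b) = -4*((2*c - a)*(2*c + a))) by (rewrite jacdet_explicit; nra).
  rewrite Ea in Ja |- *. rewrite Ema in Jma |- *. rewrite Eb, Emb.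
  assert (Ha : a <> 0) by (intros ->; apply Ja; ring).
  assert (Hp : 2*c - a <> 0) by (intro E; apply Ja; rewrite E; ring).
  assert (Hm : 2*c + a <> 0) by (intro E; apply Jma; rewrite E; ring).
  field. auto.
Qed.

(* Two points on each line: they are symmetric, and their magnifications cancel. *)
Lemma two_by_two_magnifications_cancel (c s1 : R) (x y z w : R * R) :
  on_u_axis c s1 x -> on_u_axis c s1 y -> on_line_2c c s1 z -> on_line_2c c s1 w ->
  x <> y -> z <> w ->
  magnification c x + magnification c y + magnification c z + magnification c w = 0.
Proof.
  unfold on_u_axis, on_line_2c, is_preimage, eta1, magnification.
  intros [a [-> [[Ha _] Ja]]] [a' [-> [[Ha' _] Ja']]]
         [b [-> [Hb _]]] [b' [-> [Hb' _]]] nxy nzw; simpl.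
  assert (Ea : a' = - a) by (apply distinct_equal_squares; [lra | intros ->; auto]).
  assert (Eb : b' = - b) by (apply distinct_equal_squares; [lra | intros ->; auto]).
  subst a' b'.
  apply symmetric_magnifications_cancel; auto; lra.
Qed.

Lemma two_by_two_split {T : Type} (A B : T -> Prop) (g : T -> R) (p1 p2 p3 p4 : T) :
  (forall x y z, A x -> A y -> A z -> x <> y -> x <> z -> y <> z -> False) ->
  (forall x y z, B x -> B y -> B z -> x <> y -> x <> z -> y <> z -> False) ->
  (forall x y z w, A x -> A y -> B z -> B w -> x <> y -> z <> w ->
     g x + g y + g z + g w = 0) ->
  A p1 \/ B p1 -> A p2 \/ B p2 -> A p3 \/ B p3 -> A p4 \/ B p4 ->
  p1 <> p2 -> p1 <> p3 -> p1 <> p4 -> p2 <> p3 -> p2 <> p4 -> p3 <> p4 ->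
  g p1 + g p2 + g p3 + g p4 = 0.
Proof.
  intros noA noB Hpair [H1 | H1] [H2 | H2] [H3 | H3] [H4 | H4] n12 n13 n14 n23 n24 n34;
    solve
      [ exfalso; eauto
      | match goal with
        | a1 : A ?x, a2 : A ?y, b1 : B ?z, b2 : B ?w |- _ =>
            pose proof (Hpair x y z w a1 a2 b1 b2 ltac:(assumption) ltac:(assumption));
            lra
        end ].
Qed.

Lemma magnification_sum_axis (c s1 u1 v1 u2 v2 u3 v3 u4 v4 : R) :
  is_preimage c s1 0 u1 v1 -> is_preimage c s1 0 u2 v2 ->
  is_preimage c s1 0 u3 v3 -> is_preimage c s1 0 u4 v4 ->
  (u1, v1) <> (u2, v2) -> (u1, v1) <> (u3, v3) -> (u1, v1) <> (u4, v4) ->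
  (u2, v2) <> (u3, v3) -> (u2, v2) <> (u4, v4) -> (u3, v3) <> (u4, v4) ->
  jacdet c u1 v1 <> 0 -> jacdet c u2 v2 <> 0 ->
  jacdet c u3 v3 <> 0 -> jacdet c u4 v4 <> 0 ->
  / jacdet c u1 v1 + / jacdet c u2 v2 + / jacdet c u3 v3 + / jacdet c u4 v4 = 0.
Proof.
  intros H1 H2 H3 H4 n12 n13 n14 n23 n24 n34 J1 J2 J3 J4.
  exact (two_by_two_split (on_u_axis c s1) (on_line_2c c s1) (magnification c)
           _ _ _ _ (at_most_two_on_u_axis c s1) (at_most_two_on_line_2c c s1)
           (two_by_two_magnifications_cancel c s1)
           (axis_fibre_on_two_lines _ _ _ _ H1 J1) (axis_fibre_on_two_lines _ _ _ _ H2 J2)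
           (axis_fibre_on_two_lines _ _ _ _ H3 J3) (axis_fibre_on_two_lines _ _ _ _ H4 J4)
           n12 n13 n14 n23 n24 n34).
Qed.

Theorem theorem1 (c s1 s2 u1 v1 u2 v2 u3 v3 u4 v4 : R) :
  c <> 0 ->
  (* four preimages *)
  is_preimage c s1 s2 u1 v1 -> is_preimage c s1 s2 u2 v2 ->
  is_preimage c s1 s2 u3 v3 -> is_preimage c s1 s2 u4 v4 ->
  (* pairwise distinct *)
  (u1, v1) <> (u2, v2) -> (u1, v1) <> (u3, v3) -> (u1, v1) <> (u4, v4) ->
  (u2, v2) <> (u3, v3) -> (u2, v2) <> (u4, v4) -> (u3, v3) <> (u4, v4) ->
  (* and they are all the preimages *)
  (forall u v : R, is_preimage c s1 s2 u v ->
     (u, v) = (u1, v1) \/ (u, v) = (u2, v2) \/ (u, v) = (u3, v3) \/ (u, v) = (u4, v4)) ->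
  (* nondegenerate *)
  jacdet c u1 v1 <> 0 -> jacdet c u2 v2 <> 0 ->
  jacdet c u3 v3 <> 0 -> jacdet c u4 v4 <> 0 ->
  / jacdet c u1 v1 + / jacdet c u2 v2 + / jacdet c u3 v3 + / jacdet c u4 v4 = 0.
Proof.
  intros _ H1 H2 H3 H4 n12 n13 n14 n23 n24 n34 _ J1 J2 J3 J4.
  destruct (Req_dec s2 0) as [-> | Hs2].
  - exact (magnification_sum_axis _ _ _ _ _ _ _ _ _ _
             H1 H2 H3 H4 n12 n13 n14 n23 n24 n34 J1 J2 J3 J4).
  - exact (magnification_sum_generic _ _ _ _ _ _ _ _ _ _ _
             Hs2 H1 H2 H3 H4 n12 n13 n14 n23 n24 n34 J1 J2 J3 J4).
Qed.
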